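(* Let $G$ be a finite simple graph with $n\ge2$ vertices and let $S_n=K_{1,n-1}$. The following are equivalent: (i) $G$ is regular; (ii) $|s(\{I(S_n)\}*\{I(G)\})|=1$; (iii) $|s(\{\rho(S_n)\}*\{I(G)\})|=1$.
   Context: Take $R=\mathbb{Z}$. An $R$-weighted complete graph $K$ is a finite vertex set with a weight $v_K(e)\in R$ on every 2-subset $e$. For such $H,G'$ with equal vertex counts and a bijection $f:V(H)\to V(G')$, $H*_fG'$ has vertex set $V(H)$ and weights $v_H(\{x,y\})v_{G'}(\{f(x),f(y)\})$; $H*G'=\{H*_fG': f \text{ bijection}\}$. $s(K)=\sum_e v_K(e)$, $s(\mathscr K)=\{s(K):K\in\mathscr K\}$. For a simple graph $G$, $I(G)$ has weight $1$ on edges and $0$ on non-edges; for connected $G$, $\rho(G)$ has weight $\rho_G(x,y)$ (graph distance) on $\{x,y\}$. *)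

From mathcomp Require Import all_boot all_order all_algebra.
Set Implicit Arguments. Unset Strict Implicit. Unset Printing Implicit Defensive.
Import Order.TTheory GRing.Theory Num.Theory.
Local Open Scope ring_scope.

(* A Z-weighted complete graph on vertex set V (a finType) is a weight
   function on subsets of V; only the weights of 2-subsets are relevant. *)
Definition wgraph (V : finType) := {set V} -> int.

Definition wsum (V : finType) (K : wgraph V) : int :=
  \sum_(A : {set V} | #|A| == 2%N) K A.

Definition wprod (V W : finType) (H : wgraph V) (G' : wgraph W) (f : V -> W)
  : wgraph V := fun A => H A * G' (f @: A).

(* s({H} * {G'}) as a predicate on int: the set of s(H *_f G') over
   bijections f : V(H) -> V(G'). *)
Definition sprod_set (V W : finType) (H : wgraph V) (G' : wgraph W) : int -> Prop :=
  fun z => exists f : V -> W, bijective f /\ wsum (wprod H G' f) = z.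

Definition card_one (S : int -> Prop) : Prop :=
  exists c : int, forall z, S z <-> z = c.

Definition Iw (V : finType) (e : rel V) : wgraph V :=
  fun A => (([exists x, exists y, (A == [set x; y]) && e x y]) : bool)%:R.

Fixpoint walk (V : finType) (e : rel V) (k : nat) (x y : V) : bool :=
  match k with
  | 0%N => x == y
  | k'.+1 => [exists z, e x z && walk e k' z y]
  end.

(* graph distance: least k admitting a walk of length k (for a connected
   graph some k < #|V| works) *)
Definition gdist (V : finType) (e : rel V) (x y : V) : nat :=
  find (fun k => walk e k x y) (iota 0 #|V|).

Definition rhow (V : finType) (e : rel V) : wgraph V :=
  fun A => match [pick x in A] with
           | Some x => match [pick y in A :\ x] with
                       | Some y => (gdist e x y)%:R
                       | None => 0
                       end
           | None => 0
           end.

Definition star_rel (n : nat) : rel 'I_n :=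
  fun i j => (i != j) && ((val i == 0%N) || (val j == 0%N)).

Definition regular (V : finType) (e : rel V) : Prop :=
  exists k : nat, forall x : V, #|[set y | e x y]| = k.

From mathcomp Require Import all_boot all_order all_algebra.
From mathcomp Require Import all_fingroup ring.
Set Implicit Arguments. Unset Strict Implicit. Unset Printing Implicit Defensive.
Import Order.TTheory GRing.Theory Num.Theory.
Local Open Scope ring_scope.

(* Both I(S_n) and rho(S_n) weight a pair by a if it contains the centre and
   by b otherwise, with a <> b (a = 1, b = 0, resp. a = 1, b = 2).  Moving the
   centre of the star to a vertex v of G, the sum s(H *_f I(G)) becomes
   a deg v + b (|E(G)| - deg v), which depends on f only through deg v, and
   injectively so.  As every vertex is the image of the centre under some
   bijection, the set of sums is a singleton iff all degrees agree. *)

Section Walks.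

Variables (V : finType) (e : rel V).

Lemma walk1 x y : walk e 1 x y = e x y.
Proof.
apply/existsP/idP => [[w /andP [exw /eqP <-]] //|exy].
by exists y; rewrite /= eqxx andbT.
Qed.

Lemma walk2 x w y : e x w -> e w y -> walk e 2 x y.
Proof.
move=> exw; rewrite -walk1 => ewy.
by apply/existsP; exists w; rewrite exw.
Qed.

Lemma gdist_min k x y : (k < #|V|)%N -> walk e k x y ->
  (forall j, (j < k)%N -> ~~ walk e j x y) -> gdist e x y = k.
Proof.
move=> lt_k wk below; rewrite /gdist -(subnKC (ltnW lt_k)) iotaD find_cat.
have -> : has (fun j => walk e j x y) (iota 0 k) = false.
  by apply/hasP => -[j]; rewrite mem_iota add0n => /below /negP.
by rewrite size_iota add0n -(subnSK lt_k) /= wk addn0.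
Qed.

Lemma gdist1 x y : x != y -> e x y -> gdist e x y = 1%N.
Proof.
move=> xy exy; apply: gdist_min; last by case=> // _; rewrite /= (negbTE xy).
  by have := max_card [set x; y]; rewrite cards2 xy.
by rewrite walk1.
Qed.

Lemma gdist2 x w y : [&& x != y, x != w & w != y] -> ~~ e x y ->
  e x w -> e w y -> gdist e x y = 2%N.
Proof.
case/and3P=> xy xw wy nexy exw ewy; apply: gdist_min.
- have : #|y |: [set x; w]| = 3%N.
    by rewrite cardsU1 cards2 xw !inE negb_or ![y == _]eq_sym xy wy.
  by move=> <-; apply: max_card.
- exact: walk2 exw ewy.
- by case=> [|[|]] // _; rewrite ?walk1 //= (negbTE xy).
Qed.

Lemma rhow_set2 x y : x != y -> gdist e x y = gdist e y x ->
  rhow e [set x; y] = (gdist e x y)%:R.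
Proof.
move=> xy dsym; rewrite /rhow.
case: pickP => [p|none]; last by have := none x; rewrite set21.
case: pickP => [q|none]; rewrite !inE.
  move=> /andP[qp /orP[]/eqP qE /orP[]/eqP pE]; subst p q;
    by rewrite ?eqxx ?dsym in qp *.
case/orP=> /eqP pE; [have := none y | have := none x];
  by rewrite !inE pE eqxx ?orbT ?andbT ?xy // eq_sym xy.
Qed.

End Walks.

Lemma Iw_set2 (V : finType) (e : rel V) : symmetric e ->
  forall x y, x != y -> Iw e [set x; y] = (e x y)%:R.
Proof.
move=> e_sym x y xy; rewrite /Iw; congr (nat_of_bool _)%:R.
apply/existsP/idP => [[x' /existsP [y' /andP [/eqP E exy']]]|exy]; last first.
  by exists x; apply/existsP; exists y; rewrite eqxx.
have : x \in [set x'; y'] /\ y \in [set x'; y'] by rewrite -E set21 set22.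
case=> /set2P[]xE /set2P[]yE; subst x y; rewrite ?eqxx // in xy.
by rewrite e_sym.
Qed.

Definition star_weighted (V : finType) (H : wgraph V) (c : V) (a b : int) :=
  forall x y, x != y -> H [set x; y] = if c \in [set x; y] then a else b.

Lemma star_rel_sym n : symmetric (@star_rel n).
Proof. by move=> i j; rewrite /star_rel eq_sym orbC. Qed.

Section Star.

Variables (n : nat) (c : 'I_n).
Hypothesis c0 : val c = 0%N.

Lemma star_relE i j : star_rel i j = (i != j) && (c \in [set i; j]).
Proof. by rewrite /star_rel in_set2 -!val_eqE c0 ![0%N == _]eq_sym. Qed.

Lemma gdist_star i j : i != j ->
  gdist (@star_rel n) i j = if c \in [set i; j] then 1%N else 2%N.
Proof.
move=> ij; case: ifP => cij; first by rewrite gdist1 // star_relE ij.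
move/negbT: cij; rewrite in_set2 => /norP[ci cj].
have ic : i != c by rewrite eq_sym.
apply: (@gdist2 _ _ i c); rewrite ?star_relE ?in_set2 ?eqxx ?orbT ?andbT //.
- by rewrite ij ic cj.
- by rewrite (negbTE ci) (negbTE cj) andbF.
Qed.

Lemma Iw_star_weighted : star_weighted (Iw (@star_rel n)) c 1 0.
Proof.
move=> i j ij; rewrite Iw_set2 ?star_relE ?ij //; last exact: star_rel_sym.
by case: (c \in _).
Qed.

Lemma rhow_star_weighted : star_weighted (rhow (@star_rel n)) c 1 2.
Proof.
move=> i j ij; rewrite rhow_set2 // (gdist_star ij); first by case: (c \in _).
by rewrite !gdist_star 1?eq_sym // setUC.
Qed.

End Star.

Definition wdeg (V : finType) (K : wgraph V) (v : V) : int :=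
  \sum_(A : {set V} | (#|A| == 2%N) && (v \in A)) K A.

Lemma pairs_through (V : finType) (v : V) (A : {set V}) :
  (#|A| == 2%N) && (v \in A) =
  (A \in (fun y => [set v; y]) @: [set y | y != v]).
Proof.
apply/andP/imsetP => [[/cards2P [x [y [xy ->]]]]|[y]].
  case/set2P=> vE; subst v; first by exists y; rewrite // inE eq_sym.
  by exists x; rewrite ?inE // setUC.
by rewrite inE => yv ->; rewrite cards2 (eq_sym v) yv set21.
Qed.

Lemma wdeg_Iw (V : finType) (e : rel V) : symmetric e -> irreflexive e ->
  forall v, wdeg (Iw e) v = #|[set y | e v y]|%:R.
Proof.
move=> e_sym e_irr v; rewrite /wdeg (eq_bigl _ _ (pairs_through v)) big_imset.
  rewrite /= -sum1_card natr_sum big_mkcond [RHS]big_mkcond.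
  apply: eq_bigr => y _; rewrite !inE.
  case: eqP => [->|/eqP yv]; rewrite ?e_irr // Iw_set2 1?eq_sym //.
  by case: (e v y).
move=> y1 y2; rewrite !inE => y1v y2v E.
have : y1 \in [set v; y2] by rewrite -E set22.
by rewrite in_set2 (negbTE y1v) => /eqP.
Qed.

Lemma wsum_split (V : finType) (K : wgraph V) (v : V) (a b : int) :
  \sum_(A : {set V} | #|A| == 2%N) (if v \in A then a else b) * K A =
  a * wdeg K v + b * (wsum K - wdeg K v).
Proof.
have -> : wsum K =
    wdeg K v + \sum_(A : {set V} | (#|A| == 2%N) && (v \notin A)) K A.
  by rewrite /wsum (bigID (fun A : {set V} => v \in A)).
rewrite [wdeg K v + _]addrC addrK /wdeg (bigID (fun A : {set V} => v \in A)) /=.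
rewrite !mulr_sumr.
by congr (_ + _); apply: eq_bigr => A /andP[_ vA]; rewrite ?(negbTE vA) ?vA.
Qed.

Lemma wsum_wprod_star (V W : finType) (H : wgraph V) (G : wgraph W)
    (c : V) (a b : int) (f : V -> W) :
  star_weighted H c a b -> bijective f ->
  wsum (wprod H G f) = a * wdeg G (f c) + b * (wsum G - wdeg G (f c)).
Proof.
move=> Hstar [g fK gK]; rewrite -wsum_split /wsum /wprod.
have fg_id (B : {set W}) : f @: (g @: B) = B.
  by rewrite -imset_comp (eq_imset _ gK) imset_id.
have gf_id (A : {set V}) : g @: (f @: A) = A.
  by rewrite -imset_comp (eq_imset _ fK) imset_id.
rewrite (reindex (fun B : {set W} => g @: B)); last first.
  by exists (fun A : {set V} => f @: A) => ? _; rewrite ?fg_id ?gf_id.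
have g_inj : injective g := can_inj gK.
apply: eq_big => [B|B]; first by rewrite card_imset.
rewrite fg_id card_imset // => /cards2P [x [y [xy ->]]].
rewrite imsetU1 imset_set1 Hstar ?(inj_eq g_inj) //.
have gE u : (c == g u) = (f c == u).
  by apply/eqP/eqP => [->|<-]; rewrite ?gK ?fK.
by rewrite !in_set2 !gE.
Qed.

Lemma bij_of_card_eq (V W : finType) :
  #|V| = #|W| -> exists f : V -> W, bijective f.
Proof.
move=> eqVW; exists (fun u => enum_val (cast_ord eqVW (enum_rank u))).
exists (fun w => enum_val (cast_ord (esym eqVW) (enum_rank w))) => u.
  by rewrite enum_valK cast_ordK enum_rankK.
by rewrite enum_valK cast_ordKV enum_rankK.
Qed.

Lemma bij_with_value (V W : finType) : #|V| = #|W| ->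
  forall (z : V) (x : W), exists2 f : V -> W, bijective f & f z = x.
Proof.
move=> /bij_of_card_eq[h h_bij] z x.
exists (tperm (h z) x \o h); last by rewrite /= tpermL.
by apply: bij_comp => //; exists (tperm (h z) x) => w; rewrite tpermK.
Qed.

Lemma card_one_sprod_set (V W : finType) (H : wgraph V) (G : wgraph W)
    (z : V) (g : W -> int) : #|V| = #|W| ->
  (forall f, bijective f -> wsum (wprod H G f) = g (f z)) ->
  card_one (sprod_set H G) <-> exists c, forall x, g x = c.
Proof.
move=> eqVW sumE; split=> [[c Hc]|[c gc]].
  exists c => x; have [f f_bij fz] := bij_with_value eqVW z x.
  by rewrite -fz -sumE //; apply/Hc; exists f.
exists c => w; split=> [[f [f_bij <-]]|->]; first by rewrite sumE.
have [f f_bij] := bij_of_card_eq eqVW.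
by exists f; rewrite sumE.
Qed.

Lemma regular_iff_inj (V : finType) (e : rel V) (phi : int -> int) :
  injective phi ->
  regular e <-> exists c, forall x, phi #|[set y | e x y]|%:R = c.
Proof.
move=> phi_inj; split=> [[k degE]|[c degE]].
  by exists (phi k%:R) => x; rewrite degE.
case: (pickP (fun _ : V => true)) => [x0 _|none]; last first.
  by exists 0%N => x; have := none x.
exists #|[set y | e x0 y]| => x; apply/eqP; rewrite -(eqr_nat int).
by apply/eqP/phi_inj; rewrite !degE.
Qed.

Lemma regular_iff_card_one_star (V T : finType) (e : rel T) (H : wgraph V)
    (c : V) (a b : int) :
  symmetric e -> irreflexive e -> #|V| = #|T| -> a != b ->
  star_weighted H c a b ->
  regular e <-> card_one (sprod_set H (Iw e)).
Proof.
move=> e_sym e_irr eqVT ab Hstar.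
pose phi (d : int) := a * d + b * (wsum (Iw e) - d).
have phi_inj : injective phi.
  move=> d1 d2 /eqP; rewrite -subr_eq0.
  have -> : phi d1 - phi d2 = (a - b) * (d1 - d2) by rewrite /phi; ring.
  by rewrite mulf_eq0 !subr_eq0 (negbTE ab) => /eqP.
rewrite (regular_iff_inj _ phi_inj).
pose g x := phi #|[set y | e x y]|%:R.
rewrite (card_one_sprod_set (z := c) (g := g)) //.
by move=> f f_bij; rewrite (wsum_wprod_star _ Hstar f_bij) wdeg_Iw.
Qed.

Theorem mainTheorem17 (T : finType) (e : rel T)
  (e_sym : symmetric e) (e_irr : irreflexive e) (hn : (2 <= #|T|)%N) :
  (regular e <-> card_one (sprod_set (Iw (@star_rel #|T|)) (Iw e))) /\
  (regular e <-> card_one (sprod_set (rhow (@star_rel #|T|)) (Iw e))).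
Proof.
pose c : 'I_#|T| := Ordinal (ltnW hn).
have c0 : val c = 0%N by [].
have reg_iff := regular_iff_card_one_star e_sym e_irr (card_ord #|T|).
split; first by apply: reg_iff _ (Iw_star_weighted c0).
by apply: reg_iff _ (rhow_star_weighted c0).
Qed.
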